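(* Let $2\le m\le n$ and let $G=P_m\times P_n$ be the rectangular grid with vertex set $\{1,\dots,m\}\times\{1,\dots,n\}$, two vertices being adjacent iff they differ by $1$ in exactly one coordinate. Then the boundary cycle of $G$ (the cycle through all vertices with $i\in\{1,m\}$ or $j\in\{1,n\}$) is an $(m-1)$-supported cycle in $G$.
   Context: A cycle $C$ in a graph $G$ is $k$-supported if it can be partitioned into three edge-disjoint paths $I_1,I_2,I_3$, with $I_1\cap I_2$, $I_2\cap I_3$, $I_3\cap I_1$ each a single vertex, such that for all vertices $u_i\in V(I_i)$ ($i=1,2,3$), $\max_{i,j\in\{1,2,3\}} d_G(u_i,u_j)\ge k$, where $d_G$ is the graph distance. *)

From mathcomp Require Import all_boot.
Set Implicit Arguments. Unset Strict Implicit. Unset Printing Implicit Defensive.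

Section GraphDefs.
Variable T : finType.
Variable e : rel T.

Definition is_graph_cycle (c : seq T) : Prop :=
  [/\ uniq c, cycle e c & 3 <= size c].

(* d_G(u,v) >= k : every walk from u to v has at least k edges
   (d_G(u,v) = +oo if there is no walk). *)
Definition dist_ge (u v : T) (k : nat) : Prop :=
  forall p : seq T, path e u p -> last u p = v -> k <= size p.

(* k-supported cycle: the cycle c is split (after a rotation) into three
   consecutive nonempty blocks; the three paths I_1, I_2, I_3 are the arcs
   x1::t1 ++ [x2], x2::t2 ++ [x3], x3::t3 ++ [x1]; these are edge-disjoint,
   cover C, and pairwise meet in exactly one vertex. *)
Definition k_supported (c : seq T) (k : nat) : Prop :=
  is_graph_cycle c /\
  exists (r : nat) (x1 x2 x3 : T) (t1 t2 t3 : seq T),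
    rot r c = (x1 :: t1) ++ (x2 :: t2) ++ (x3 :: t3) /\
    let I := [:: x1 :: rcons t1 x2; x2 :: rcons t2 x3; x3 :: rcons t3 x1] in
    forall u : 'I_3 -> T, (forall i : 'I_3, u i \in nth [::] I i) ->
      exists i j : 'I_3, dist_ge (u i) (u j) k.
End GraphDefs.

(* Grid P_m x P_n on vertex set 'I_m * 'I_n (0-indexed coordinates). *)
Definition grid_adj (m n : nat) : rel ('I_m * 'I_n) :=
  fun u v =>
    ((u.1 == v.1) && ((u.2.+1 == v.2 :> nat) || (v.2.+1 == u.2 :> nat)))
    || ((u.2 == v.2) && ((u.1.+1 == v.1 :> nat) || (v.1.+1 == u.1 :> nat))).

Definition boundary_nat (m n : nat) : seq (nat * nat) :=
  [seq (0, j) | j <- iota 0 n]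
  ++ [seq (i, n.-1) | i <- iota 1 m.-1]
  ++ [seq (m.-1, n.-1 - j) | j <- iota 1 n.-1]
  ++ [seq (m.-1 - i, 0) | i <- iota 1 (m - 2)].

Definition to_grid (m n : nat) (p : nat * nat) : option ('I_m * 'I_n) :=
  match insub p.1 : option 'I_m, insub p.2 : option 'I_n with
  | Some a, Some b => Some (a, b)
  | _, _ => None
  end.

Definition boundary_cycle (m n : nat) : seq ('I_m * 'I_n) :=
  pmap (@to_grid m n) (boundary_nat m n).

From mathcomp Require Import all_boot zify.

Set Implicit Arguments.
Unset Strict Implicit.
Unset Printing Implicit Defensive.

(* Walking around the boundary starting from the corner (0,0),
   the k-th boundary vertex is an explicit point [perim_pt k], so the
   boundary cycle is the image of 0, ..., N-1 (N = 2(a+b+2)) under an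
   injective map whose consecutive values (cyclically) are adjacent; this
   gives the cycle property.  Cut the cycle at the three corners (0,0),
   (0,n-1), (m-1,n-1): the first arc lies in row 0, the second in column
   n-1, and every vertex of the third lies in row m-1 or in column 0.
   Since every grid walk is at least as long as the L1 distance of its ends,
   a point of the third arc is at distance >= m-1 either from any point of
   the first arc (if it lies in row m-1) or from any point of the second arc
   (if it lies in column 0, as n-1 >= m-1). *)

Definition nat_adj (p q : nat * nat) : bool :=
  ((p.1 == q.1) && ((p.2.+1 == q.2) || (q.2.+1 == p.2)))
  || ((p.2 == q.2) && ((p.1.+1 == q.1) || (q.1.+1 == p.1))).

(* L1 distance of integer points (the truncated differences add up to the
   absolute values). *)
Definition l1_dist (p q : nat * nat) : nat :=
  (p.1 - q.1) + (q.1 - p.1) + (p.2 - q.2) + (q.2 - p.2).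

Lemma path_map_iota (T : Type) (e : rel T) (g : nat -> T) k l :
  (forall j, k <= j < k + l -> e (g j) (g j.+1)) ->
  path e (g k) [seq g j | j <- iota k.+1 l] /\
  last (g k) [seq g j | j <- iota k.+1 l] = g (k + l).
Proof.
elim: l k => [|l IH] k step /=; first by rewrite addn0.
have step' j : k.+1 <= j < k.+1 + l -> e (g j) (g j.+1).
  by move=> hj; apply: step; lia.
have [-> ->] := IH k.+1 step'.
by rewrite addSnnS step //; lia.
Qed.

Lemma cycle_map_iota (T : Type) (e : rel T) (g : nat -> T) l :
  (forall k, k.+1 < l -> e (g k) (g k.+1)) -> e (g l.-1) (g 0) ->
  cycle e [seq g k | k <- iota 0 l].
Proof.
case: l => [|l] //= step close.
have step' j : 0 <= j < 0 + l -> e (g j) (g j.+1).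
  by move=> hj; apply: step; lia.
have [walk walk_end] := path_map_iota step'.
by rewrite rcons_path walk walk_end.
Qed.

Lemma map_iota_shift (T : Type) (f g : nat -> T) s s' l :
  (forall j, s <= j < s + l -> f j = g (s' + (j - s))) ->
  [seq f j | j <- iota s l] = [seq g j | j <- iota s' l].
Proof.
elim: l s s' => [|l IH] s s' shift //=.
rewrite shift ?subnn ?addn0; last lia.
congr (_ :: _); apply: IH => j hj; rewrite shift; first congr g; lia.
Qed.

Section Perimeter.
Variables a b : nat.

Definition perimeter : nat := 2 * (a + b + 2).

Definition perim_pt (k : nat) : nat * nat :=
  if k <= b.+1 then (0, k)
  else if k <= a + b + 2 then (k - b.+1, b.+1)
  else if k <= a + 2 * b + 3 then (a.+1, a + 2 * b + 3 - k)
  else (2 * a + 2 * b + 4 - k, 0).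

Lemma boundary_natE : boundary_nat a.+2 b.+2 = map perim_pt (iota 0 perimeter).
Proof.
rewrite /perimeter (_ : 2 * _ = b.+2 + (a.+1 + (b.+1 + a))); last lia.
rewrite /boundary_nat subn2 !iotaD !map_cat; congr (_ ++ _ ++ _ ++ _).
all: apply: map_iota_shift => j hj; rewrite /perim_pt.
all: by repeat case: ifP => ?; congr pair; lia.
Qed.

Lemma perim_pt_adj k : k.+1 < perimeter -> nat_adj (perim_pt k) (perim_pt k.+1).
Proof. rewrite /perimeter /perim_pt /nat_adj => hk; by repeat case: ifP => ? /=; lia. Qed.

Lemma perim_pt_close : nat_adj (perim_pt perimeter.-1) (perim_pt 0).
Proof. rewrite /perimeter /perim_pt /nat_adj; by repeat case: ifP => ? /=; lia. Qed.

Lemma perim_pt_perimeter : perim_pt perimeter = perim_pt 0.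
Proof. rewrite /perimeter /perim_pt; by repeat case: ifP => ? /=; congr pair; lia. Qed.

Lemma perim_pt_inj : {in iota 0 perimeter &, injective perim_pt}.
Proof.
move=> k k'; rewrite !mem_iota /perimeter /perim_pt => hk hk'.
by repeat case: ifP => ? /=; case; lia.
Qed.

Lemma perim_pt_bound k : ((perim_pt k).1 < a.+2) && ((perim_pt k).2 < b.+2).
Proof. rewrite /perim_pt; by repeat case: ifP => ? /=; lia. Qed.

Lemma perim_pt_first_arc k : k <= b.+1 -> (perim_pt k).1 = 0.
Proof. by rewrite /perim_pt => ->. Qed.

Lemma perim_pt_second_arc k :
  b.+1 <= k <= a + b + 2 -> (perim_pt k).2 = b.+1.
Proof. move=> hk; rewrite /perim_pt; by repeat case: ifP => ? /=; lia. Qed.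

Lemma perim_pt_third_arc k :
  a + b + 2 <= k -> (perim_pt k).1 = a.+1 \/ (perim_pt k).2 = 0.
Proof. move=> hk; rewrite /perim_pt; by repeat case: ifP => ? /=; lia. Qed.

End Perimeter.

Section Grid.
Variables m n : nat.

Definition coords (v : 'I_m * 'I_n) : nat * nat := (val v.1, val v.2).

Lemma coordsK : pcancel coords (@to_grid m n).
Proof. by case=> i j; rewrite /to_grid /= !valK. Qed.

Lemma grid_adjE u v : grid_adj u v = nat_adj (coords u) (coords v).
Proof. by []. Qed.

(* Each edge changes the L1 distance by one, so a walk is at least as long
   as the L1 distance between its ends. *)
Lemma grid_walk_l1 u p : path (@grid_adj m n) u p ->
  l1_dist (coords u) (coords (last u p)) <= size p.
Proof.
elim: p u => [|v p IH] u /=; first by rewrite /l1_dist; lia.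
case/andP; rewrite grid_adjE => uv /IH; rewrite /l1_dist /nat_adj in uv *; lia.
Qed.

Lemma grid_dist_ge u v k :
  k <= l1_dist (coords u) (coords v) -> dist_ge (@grid_adj m n) u v k.
Proof. by move=> hk p /grid_walk_l1 + end_v; rewrite end_v; apply: leq_trans. Qed.
End Grid.

Lemma mem_arc (T : eqType) (g : nat -> T) s l e u :
  s + l.+1 = e -> u \in g s :: rcons [seq g j | j <- iota s.+1 l] (g e) ->
  exists2 k, s <= k <= e & u = g k.
Proof.
move=> <-; rewrite in_cons mem_rcons in_cons => /or3P[/eqP->|/eqP->|].
- by exists s; rewrite ?leqnn ?leq_addr.
- by exists (s + l.+1); rewrite ?leqnn ?leq_addr.
- by case/mapP => k; rewrite mem_iota => hk ->; exists k => //; lia.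
Qed.

Section BoundaryCycle.
Variables a b : nat.

Definition grid_pt (k : nat) : 'I_a.+2 * 'I_b.+2 :=
  (inord (perim_pt a b k).1, inord (perim_pt a b k).2).

Lemma coords_grid_pt k : coords (grid_pt k) = perim_pt a b k.
Proof.
have /andP[h1 h2] := perim_pt_bound a b k.
by rewrite /coords /= !inordK //; case: (perim_pt a b k).
Qed.

Lemma boundary_cycleE :
  boundary_cycle a.+2 b.+2 = map grid_pt (iota 0 (perimeter a b)).
Proof.
rewrite /boundary_cycle boundary_natE.
rewrite (eq_map (fun k => esym (coords_grid_pt k))) map_comp.
exact: (map_pK (@coordsK a.+2 b.+2)).
Qed.

Lemma boundary_cycle_graph :
  is_graph_cycle (@grid_adj a.+2 b.+2) (boundary_cycle a.+2 b.+2).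
Proof.
rewrite boundary_cycleE; split.
- rewrite map_inj_in_uniq ?iota_uniq // => k k' hk hk' /(congr1 (@coords _ _)).
  by rewrite !coords_grid_pt; apply: perim_pt_inj.
- apply: cycle_map_iota => [k hk|]; rewrite grid_adjE !coords_grid_pt.
  + exact: perim_pt_adj.
  + exact: perim_pt_close.
- by rewrite size_map size_iota /perimeter; lia.
Qed.

Lemma boundary_cycle_split :
  boundary_cycle a.+2 b.+2 =
  grid_pt 0 :: [seq grid_pt k | k <- iota 1 b] ++
  grid_pt b.+1 :: [seq grid_pt k | k <- iota b.+2 a] ++
  grid_pt (a + b + 2) :: [seq grid_pt k | k <- iota (a + b + 2).+1 (a + b + 1)].
Proof.
rewrite boundary_cycleE /perimeter.
rewrite (_ : 2 * _ = 1 + (b + (1 + (a + (1 + (a + b + 1)))))); last lia.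
rewrite 5!iotaD !map_cat /=.
by congr (_ :: _ ++ grid_pt _ :: map _ (iota _ _) ++ grid_pt _ :: map _ (iota _ _)); lia.
Qed.

Lemma grid_pt_perimeter : grid_pt (perimeter a b) = grid_pt 0.
Proof. by rewrite /grid_pt perim_pt_perimeter. Qed.
End BoundaryCycle.

Theorem mainTheorem5 (m n : nat) (hm : 2 <= m) (hmn : m <= n) :
  k_supported (@grid_adj m n) (boundary_cycle m n) (m - 1).
Proof.
move: hm hmn; case: m => [|[|a]] //; case: n => [|[|b]] // _ hab.
split; first exact: boundary_cycle_graph.
exists 0; do 6 eexists; split; first by rewrite rot0 boundary_cycle_split.
move=> arcs u hu.
have [k1 hk1 u1] := mem_arc (erefl _) (hu ord0).
have end2 : b.+1 + a.+1 = a + b + 2 by lia.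
have [k2 hk2 u2] := mem_arc end2 (hu (@Ordinal 3 1 isT)).
have end3 : a + b + 2 + (a + b + 1).+1 = perimeter a b by rewrite /perimeter; lia.
have in3 := hu (@Ordinal 3 2 isT); rewrite /= -(grid_pt_perimeter a b) in in3.
have [k3 hk3 u3] := mem_arc end3 in3.
have [row|col] := perim_pt_third_arc (proj1 (andP hk3)).
- exists ord0, (@Ordinal 3 2 isT); rewrite u1 u3; apply: grid_dist_ge.
  by rewrite !coords_grid_pt /l1_dist perim_pt_first_arc ?row; lia.
- exists (@Ordinal 3 1 isT), (@Ordinal 3 2 isT); rewrite u2 u3; apply: grid_dist_ge.
  by rewrite !coords_grid_pt /l1_dist perim_pt_second_arc ?col; lia.
Qed.
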